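(* Let $\mathfrak{S}=(\mathcal{X},\mathsf{S},\gamma,(\Lambda_{a})_{a\in\mathcal{A}})$ be a spectral decomposition system for the Euclidean space $\mathfrak{H}$, let $\varphi\colon\mathcal{X}\to\left]-\infty,+\infty\right]$ be proper and $\mathsf{S}$-invariant, and let $X\in\mathfrak{H}$. Then: (i) for every $Y\in\mathfrak{H}$, $Y\in\partial(\varphi\circ\gamma)(X)$ if and only if $\gamma(Y)\in\partial\varphi(\gamma(X))$ and there exists $a\in\mathcal{A}$ such that $X=\Lambda_a\gamma(X)$ and $Y=\Lambda_a\gamma(Y)$; (ii) $\partial(\varphi\circ\gamma)(X)=\{\Lambda_ay: y\in\partial\varphi(\gamma(X)),\ a\in\mathcal{A}_X\}$; (iii) $\partial(\varphi\circ\gamma)(X)$ is a singleton if and only if $\partial\varphi(\gamma(X))$ is a singleton.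
   Context: A Euclidean space is a finite-dimensional real inner product space; inner products are written $\langle\cdot,\cdot\rangle$ and norms $\|\cdot\|$. Let $\mathfrak{H}$ and $\mathcal{X}$ be Euclidean spaces, let $\mathsf{S}$ be a group acting on $\mathcal{X}$ by linear isometries, let $\gamma\colon\mathfrak{H}\to\mathcal{X}$, and let $(\Lambda_a)_{a\in\mathcal{A}}$ be a family of linear operators from $\mathcal{X}$ to $\mathfrak{H}$. The orbit of $x$ is $\mathsf{S}\cdot x=\{s\cdot x: s\in\mathsf{S}\}$; a map $f$ on $\mathcal{X}$ is $\mathsf{S}$-invariant if $f(s\cdot x)=f(x)$ for all $s,x$. The tuple is a spectral decomposition system for $\mathfrak{H}$ if: [A] every $\Lambda_a$ is an isometry; [B] there exists an $\mathsf{S}$-invariant $\tau\colon\mathcal{X}\to\mathcal{X}$ with $\tau(x)\in\mathsf{S}\cdot x$ for all $x$ and $\gamma\circ\Lambda_a=\tau$ for all $a$; [C] for every $X\in\mathfrak{H}$ there is $a$ with $X=\Lambda_a\gamma(X)$; [D] $\langle X,Y\rangle\leq\langle\gamma(X),\gamma(Y)\rangle$ for all $X,Y\in\mathfrak{H}$. For $X\in\mathfrak{H}$, $\mathcal{A}_X=\{a\in\mathcal{A}: X=\Lambda_a\gamma(X)\}$. A function is proper if it never takes $-\infty$ and is finite somewhere; the subdifferential of $f$ on a Euclidean space $\mathcal{H}$ is $\partial f(x)=\{y:\langle z-x,y\rangle+f(x)\leq f(z)\ \forall z\in\mathcal{H}\}$. *)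

From HB Require Import structures.
From mathcomp Require Import all_boot all_order all_algebra.
From mathcomp Require Import boolp classical_sets reals constructive_ereal.
Set Implicit Arguments. Unset Strict Implicit. Unset Printing Implicit Defensive.
Import Order.TTheory GRing.Theory Num.Theory.
Local Open Scope ring_scope.
Local Open Scope classical_set_scope.

(* Euclidean spaces are modelled as row spaces 'rV[R]_n with the standard
   inner product (every Euclidean space is isometric to such a space). *)
Definition dotp (R : realType) (n : nat) (u v : 'rV[R]_n) : R := (u *m v^T) 0 0.
Definition vnorm (R : realType) (n : nat) (u : 'rV[R]_n) : R := Num.sqrt (dotp u u).

Definition isometric_group_action (R : realType) (m : nat) (G : Type)
  (mulG : G -> G -> G) (oneG : G) (invG : G -> G)
  (act : G -> 'rV[R]_m -> 'rV[R]_m) : Prop :=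
  [/\ (forall g h k, mulG g (mulG h k) = mulG (mulG g h) k),
      (forall g, mulG oneG g = g /\ mulG g oneG = g)
    & (forall g, mulG (invG g) g = oneG /\ mulG g (invG g) = oneG)] /\
  [/\ (forall x, act oneG x = x),
      (forall g h x, act (mulG g h) x = act g (act h x)),
      (forall g (c : R) x y, act g (c *: x + y) = c *: act g x + act g y)
    &
      (forall g x, vnorm (act g x) = vnorm x)].

Definition orbit (R : realType) (m : nat) (G : Type)
  (act : G -> 'rV[R]_m -> 'rV[R]_m) (x : 'rV[R]_m) : set 'rV[R]_m :=
  [set act g x | g in [set: G]].

Definition S_invariant (R : realType) (m : nat) (G : Type) (T : Type)
  (act : G -> 'rV[R]_m -> 'rV[R]_m) (f : 'rV[R]_m -> T) : Prop :=
  forall g x, f (act g x) = f x.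

Definition spectral_decomposition_system (R : realType) (n m : nat) (G : Type)
  (mulG : G -> G -> G) (oneG : G) (invG : G -> G)
  (act : G -> 'rV[R]_m -> 'rV[R]_m)
  (gamma : 'rV[R]_n -> 'rV[R]_m) (A : Type) (Lam : A -> 'rV[R]_m -> 'rV[R]_n) : Prop :=
  isometric_group_action mulG oneG invG act /\
  (forall a (c : R) x y, Lam a (c *: x + y) = c *: Lam a x + Lam a y) /\
  [/\
      (forall a x, vnorm (Lam a x) = vnorm x),
      (exists tau : 'rV[R]_m -> 'rV[R]_m,
         [/\ S_invariant act tau,
             (forall x, orbit act x (tau x))
           & (forall a x, gamma (Lam a x) = tau x)]),
      (forall X, exists a, X = Lam a (gamma X))
    &
      (forall X Y, dotp X Y <= dotp (gamma X) (gamma Y))].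

Definition A_of (R : realType) (n m : nat) (gamma : 'rV[R]_n -> 'rV[R]_m)
  (A : Type) (Lam : A -> 'rV[R]_m -> 'rV[R]_n) (X : 'rV[R]_n) : set A :=
  [set a | X = Lam a (gamma X)].

Definition proper_fun (R : realType) (m : nat) (f : 'rV[R]_m -> \bar R) : Prop :=
  (forall x, f x <> -oo%E) /\ exists x (r : R), f x = r%:E.

Definition subdiff (R : realType) (k : nat) (f : 'rV[R]_k -> \bar R) (x : 'rV[R]_k)
  : set 'rV[R]_k :=
  [set y | forall z, ((dotp (z - x) y)%:E + f x <= f z)%E].

(* The key fact is the equality case of [D]: <X, Y> = <gamma X, gamma Y>
   holds exactly when X and Y are decomposed by a common Lambda_a.  Testing
   the subgradient inequality of phi o gamma at Lambda_b (gamma X), where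
   Y = Lambda_b (gamma Y), forces this equality, and the change of variables
   Z = Lambda_a z then transfers subgradients in both directions.  For (iii),
   all subgradients of phi o gamma at X then share the spectrum gamma Y, so
   convexity of the subdifferential and strict convexity of the norm make
   them coincide. *)

From mathcomp Require Import all_boot all_order all_algebra.
From mathcomp Require Import boolp classical_sets reals constructive_ereal.
From mathcomp Require Import lra.
Set Implicit Arguments. Unset Strict Implicit. Unset Printing Implicit Defensive.
Import Order.TTheory GRing.Theory Num.Theory.
Local Open Scope ring_scope.
Local Open Scope classical_set_scope.

Section InnerProduct.
Variables (R : realType) (n : nat).
Implicit Types u v w : 'rV[R]_n.

Lemma dotpE u v : dotp u v = \sum_i u 0 i * v 0 i.
Proof. by rewrite /dotp !mxE; apply: eq_bigr => i _; rewrite mxE. Qed.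

Lemma dotpC u v : dotp u v = dotp v u.
Proof. by rewrite !dotpE; apply: eq_bigr => i _; rewrite mulrC. Qed.

Lemma dotpDl u v w : dotp (u + v) w = dotp u w + dotp v w.
Proof. by rewrite /dotp mulmxDl mxE. Qed.

Lemma dotpZl c u w : dotp (c *: u) w = c * dotp u w.
Proof. by rewrite /dotp -scalemxAl mxE. Qed.

Lemma dotpBl u v w : dotp (u - v) w = dotp u w - dotp v w.
Proof. by rewrite dotpDl -scaleN1r dotpZl mulN1r. Qed.

Lemma dotpDr u v w : dotp w (u + v) = dotp w u + dotp w v.
Proof. by rewrite dotpC dotpDl !(dotpC w). Qed.

Lemma dotpZr c u w : dotp w (c *: u) = c * dotp w u.
Proof. by rewrite dotpC dotpZl dotpC. Qed.

Lemma dotpBr u v w : dotp w (u - v) = dotp w u - dotp w v.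
Proof. by rewrite dotpC dotpBl !(dotpC w). Qed.

Lemma dotpp_ge0 u : 0 <= dotp u u.
Proof. by rewrite dotpE; apply: sumr_ge0 => i _; rewrite -expr2 sqr_ge0. Qed.

Lemma dotpp_le0 u : dotp u u <= 0 -> u = 0.
Proof.
move=> u_le0; have /psumr_eq0P u0 : \sum_i u 0 i * u 0 i = 0.
  by apply/eqP; rewrite -dotpE eq_le u_le0 dotpp_ge0.
apply/matrixP => i j; rewrite ord1 mxE.
by apply/eqP; rewrite -sqrf_eq0 expr2 u0 // => k _; rewrite -expr2 sqr_ge0.
Qed.

Lemma dotp_convex_norm_eq (t : R) u v : 0 < t < 1 -> dotp u u = dotp v v ->
  dotp (t *: u + (1 - t) *: v) (t *: u + (1 - t) *: v) = dotp u u -> u = v.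
Proof.
(* |t u + (1 - t) v|^2 = t |u|^2 + (1 - t) |v|^2 - t (1 - t) |u - v|^2 *)
case/andP=> t_gt0 t_lt1 uv w_eq; apply/eqP; rewrite -subr_eq0; apply/eqP.
apply: dotpp_le0; rewrite !dotpBl !dotpBr (dotpC v u).
move: w_eq; rewrite !dotpDl !dotpDr !dotpZl !dotpZr (dotpC v u) uv => w_eq.
have /eqP : t * (1 - t) * (dotp v v - dotp u v) = 0 by nra.
by rewrite !mulf_eq0 subr_eq0 => /orP[/orP[/eqP|/eqP]|/eqP]; lra.
Qed.

End InnerProduct.

Lemma linearD_fun (R : realType) n k (f : 'rV[R]_n -> 'rV[R]_k) :
  GRing.linear_for *:%R f -> forall x y, f (x + y) = f x + f y.
Proof. by move=> f_lin x y; have := f_lin 1 x y; rewrite !scale1r. Qed.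

Lemma linearB_fun (R : realType) n k (f : 'rV[R]_n -> 'rV[R]_k) :
  GRing.linear_for *:%R f -> forall x y, f (x - y) = f x - f y.
Proof. by move=> f_lin x y; rewrite addrC -scaleN1r f_lin scaleN1r addrC. Qed.

Lemma linear_isometry_dotp (R : realType) n k (f : 'rV[R]_n -> 'rV[R]_k) :
  GRing.linear_for *:%R f -> (forall x, vnorm (f x) = vnorm x) ->
  forall u v, dotp (f u) (f v) = dotp u v.
Proof.
move=> f_lin f_iso.
have dotpp_f x : dotp (f x) (f x) = dotp x x.
  by have /eqP := f_iso x; rewrite eqr_sqrt ?dotpp_ge0 // => /eqP.
move=> u v; have := dotpp_f (u + v).
rewrite linearD_fun // !dotpDl !dotpDr !dotpp_f (dotpC (f v)) (dotpC v); lra.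
Qed.

Section Subdifferential.
Variables (R : realType) (k : nat) (f : 'rV[R]_k -> \bar R).

Lemma subdiff_proper_fin x y : proper_fun f -> subdiff f x y ->
  exists r : R, f x = r%:E.
Proof.
case=> f_neq_ninfty [x0 [r0 fx0]] /(_ x0); rewrite fx0.
by case: (f x) (f_neq_ninfty x) => [r _ _|//|//]; exists r.
Qed.

Lemma subdiff_convex x (t : R) y1 y2 : 0 <= t <= 1 ->
  subdiff f x y1 -> subdiff f x y2 -> subdiff f x (t *: y1 + (1 - t) *: y2).
Proof.
case/andP=> t_ge0 t_le1 y1_sub y2_sub z.
rewrite dotpDr !dotpZr.
have [le12|le21] := leP (dotp (z - x) y1) (dotp (z - x) y2).
- apply: le_trans (y2_sub z); rewrite leeD2r // lee_fin; nra.
- apply: le_trans (y1_sub z); rewrite leeD2r // lee_fin; nra.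
Qed.

End Subdifferential.

Section SpectralDecomposition.
Variables (R : realType) (n m : nat) (G : Type).
Variables (mulG : G -> G -> G) (oneG : G) (invG : G -> G).
Variable act : G -> 'rV[R]_m -> 'rV[R]_m.
Variables (gamma : 'rV[R]_n -> 'rV[R]_m) (A : Type).
Variable Lam : A -> 'rV[R]_m -> 'rV[R]_n.
Hypothesis sds : spectral_decomposition_system mulG oneG invG act gamma Lam.

Lemma Lam_linear a : GRing.linear_for *:%R (Lam a).
Proof. by case: sds => _ [Lam_lin _]; apply: Lam_lin. Qed.

Lemma dotp_Lam a u v : dotp (Lam a u) (Lam a v) = dotp u v.
Proof.
case: sds => _ [_ [Lam_iso _ _ _]].
exact: linear_isometry_dotp (Lam_linear a) (Lam_iso a) u v.
Qed.

Lemma dotp_act g u v : dotp (act g u) (act g v) = dotp u v.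
Proof.
case: sds => [[_ [_ _ act_lin act_iso]] _].
exact: linear_isometry_dotp (act_lin g) (act_iso g) u v.
Qed.

Lemma act_invK g : cancel (act (invG g)) (act g).
Proof.
case: sds => [[[_ _ invgK] [act1 actM _ _]] _] x.
by rewrite -actM (proj2 (invgK g)) act1.
Qed.

Lemma Lam_inj a : injective (Lam a).
Proof.
move=> u v Luv; apply/eqP; rewrite -subr_eq0; apply/eqP; apply: dotpp_le0.
by rewrite -(dotp_Lam a) (linearB_fun (Lam_linear a)) Luv subrr /dotp mul0mx mxE.
Qed.

Lemma exists_Lam_gamma X : exists a, X = Lam a (gamma X).
Proof. by case: sds => _ [_ []]. Qed.

Lemma dotp_le_gamma X Y : dotp X Y <= dotp (gamma X) (gamma Y).
Proof. by case: sds => _ [_ []]. Qed.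

Lemma gamma_Lam_orbit a x : exists g, gamma (Lam a x) = act g x.
Proof.
case: sds => _ [_ [_ [tau [_ tau_orbit gamma_Lam]] _ _]].
by have [g _ gx] := tau_orbit x; exists g; rewrite gamma_Lam gx.
Qed.

Lemma gamma_Lam_gamma a Z : gamma (Lam a (gamma Z)) = gamma Z.
Proof.
case: sds => _ [_ [_ [tau [_ _ gamma_Lam]] _ _]].
by have [b {2}->] := exists_Lam_gamma Z; rewrite !gamma_Lam.
Qed.

Lemma invariant_gamma_Lam (T : Type) (f : 'rV[R]_m -> T) a x :
  S_invariant act f -> f (gamma (Lam a x)) = f x.
Proof. by move=> f_inv; have [g ->] := gamma_Lam_orbit a x. Qed.

Lemma dotp_gamma_gamma Z : dotp (gamma Z) (gamma Z) = dotp Z Z.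
Proof. by have [a {3 4}->] := exists_Lam_gamma Z; rewrite dotp_Lam. Qed.

Lemma gammaD_of_dotp_eq U V : dotp U V = dotp (gamma U) (gamma V) ->
  gamma (U + V) = gamma U + gamma V.
Proof.
move=> UV_eq; apply/eqP; rewrite -subr_eq0; apply/eqP; apply: dotpp_le0.
have := dotp_le_gamma U (U + V); have := dotp_le_gamma V (U + V).
have := dotp_gamma_gamma (U + V); have := dotp_gamma_gamma U.
have := dotp_gamma_gamma V; move: UV_eq.
rewrite !dotpBl !dotpBr !dotpDl !dotpDr !(dotpC V U) !(dotpC (gamma V) (gamma U)).
rewrite !(dotpC (gamma (U + V))); lra.
Qed.

Lemma Lam_gamma_of_sum U V a : dotp U V = dotp (gamma U) (gamma V) ->
  U + V = Lam a (gamma (U + V)) -> U = Lam a (gamma U).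
Proof.
move=> UV_eq UV_dec; set U' := Lam a (gamma U); set V' := Lam a (gamma V).
have U'_eq : U' = U + V - V'.
  by rewrite UV_dec gammaD_of_dotp_eq // (linearD_fun (Lam_linear a)) addrK.
have := dotp_le_gamma U V'; rewrite gamma_Lam_gamma.
have : dotp U' U' = dotp U U by rewrite dotp_Lam dotp_gamma_gamma.
have : dotp U U' = dotp U U + dotp U V - dotp U V' by rewrite U'_eq !dotpBr !dotpDr.
move=> UU' U'U' UV'_le; apply/eqP; rewrite -subr_eq0; apply/eqP; apply: dotpp_le0.
rewrite !dotpBl !dotpBr (dotpC U' U); lra.
Qed.

Lemma dotp_gamma_eqP U V : dotp U V = dotp (gamma U) (gamma V) <->
  exists a, U = Lam a (gamma U) /\ V = Lam a (gamma V).
Proof.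
split=> [UV_eq|[a [{1}-> {1}->]]]; last by rewrite dotp_Lam.
have [a UV_dec] := exists_Lam_gamma (U + V).
exists a; split; first exact: Lam_gamma_of_sum UV_dec.
apply: (Lam_gamma_of_sum (U := V) (V := U)); last by rewrite addrC.
by rewrite dotpC UV_eq dotpC.
Qed.

Variable phi : 'rV[R]_m -> \bar R.
Hypotheses (phi_proper : proper_fun phi) (phi_inv : S_invariant act phi).

Lemma proper_comp_gamma : proper_fun (phi \o gamma).
Proof.
case: phi_proper => phi_neq_ninfty [x0 [r0 phix0]].
split=> [x|]; first exact: phi_neq_ninfty.
have [a _] := exists_Lam_gamma 0.
by exists (Lam a x0), r0; rewrite /= invariant_gamma_Lam.
Qed.

Lemma subdiff_comp_gamma_dotp X Y : subdiff (phi \o gamma) X Y ->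
  dotp X Y = dotp (gamma X) (gamma Y).
Proof.
move=> Y_sub; have [r /= phiX] := subdiff_proper_fin proper_comp_gamma Y_sub.
have [b Y_dec] := exists_Lam_gamma Y.
have := Y_sub (Lam b (gamma X)); rewrite /= invariant_gamma_Lam // phiX.
rewrite -EFinD lee_fin dotpBl {1}Y_dec dotp_Lam.
have := dotp_le_gamma X Y; lra.
Qed.

Lemma subdiff_comp_gammaP X Y : subdiff (phi \o gamma) X Y <->
  subdiff phi (gamma X) (gamma Y) /\
  exists a, X = Lam a (gamma X) /\ Y = Lam a (gamma Y).
Proof.
split=> [Y_sub|[gY_sub XY_dec] Z /=].
  have [a [X_dec Y_dec]] := (dotp_gamma_eqP X Y).1 (subdiff_comp_gamma_dotp Y_sub).
  split; last by exists a.
  move=> z; have := Y_sub (Lam a z); rewrite /= invariant_gamma_Lam //.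
  by rewrite {1}X_dec {1}Y_dec -(linearB_fun (Lam_linear a)) dotp_Lam.
apply: le_trans (gY_sub (gamma Z)); rewrite leeD2r // lee_fin !dotpBl.
rewrite (dotp_gamma_eqP X Y).2 //; have := dotp_le_gamma Z Y; lra.
Qed.

Lemma subdiff_comp_gamma_Lam X a y : A_of gamma Lam X a ->
  subdiff phi (gamma X) y -> subdiff (phi \o gamma) X (Lam a y).
Proof.
rewrite /A_of /= => X_dec y_sub W /=.
have [g gy] := gamma_Lam_orbit a y.
rewrite -(phi_inv (invG g) (gamma W)); apply: le_trans (y_sub _).
rewrite leeD2r // lee_fin.
rewrite !dotpBl -(dotp_act g) act_invK -gy {1}X_dec dotp_Lam.
have := dotp_le_gamma W (Lam a y); lra.
Qed.

Lemma subdiff_comp_gammaE X : subdiff (phi \o gamma) X =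
  [set Z | exists a y, [/\ A_of gamma Lam X a, subdiff phi (gamma X) y & Z = Lam a y]].
Proof.
apply/seteqP; split=> [Z /subdiff_comp_gammaP [gZ_sub [a [X_dec Z_dec]]]|Z].
  by exists a, (gamma Z).
by case=> a [y [X_dec y_sub ->]]; apply: subdiff_comp_gamma_Lam.
Qed.

Lemma subdiff_comp_gamma_set1 X :
  (exists Y, subdiff (phi \o gamma) X = [set Y]) <->
  (exists y, subdiff phi (gamma X) = [set y]).
Proof.
have [a X_dec] := exists_Lam_gamma X.
have Lam_sub y : subdiff phi (gamma X) y -> subdiff (phi \o gamma) X (Lam a y).
  exact: subdiff_comp_gamma_Lam.
split=> [[Y subE]|[y subE]].
  have /subdiff_comp_gammaP[gY_sub _] : subdiff (phi \o gamma) X Y by rewrite subE.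
  exists (gamma Y); apply/seteqP; split=> [y y_sub /=|_ ->] //.
  have := Lam_sub _ y_sub; have := Lam_sub _ gY_sub; rewrite subE /= => LgY Ly.
  exact: Lam_inj (etrans Ly (esym LgY)).
have Ly_sub : subdiff (phi \o gamma) X (Lam a y) by apply: Lam_sub; rewrite subE.
exists (Lam a y); apply/seteqP; split=> [Z Z_sub|_ ->] //.
have spectrum_y W : subdiff (phi \o gamma) X W -> dotp W W = dotp y y.
  case/subdiff_comp_gammaP; rewrite subE /= => <- _; exact/esym/dotp_gamma_gamma.
have t_01 : 0 < (2^-1 : R) < 1 by apply/andP; split; lra.
have mid_sub : subdiff (phi \o gamma) X (2^-1 *: Z + (1 - 2^-1) *: Lam a y).
  by apply: subdiff_convex => //; apply/andP; split; lra.
by apply: (dotp_convex_norm_eq t_01); rewrite !spectrum_y.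
Qed.

End SpectralDecomposition.

Theorem proposition5p5 (R : realType) (n m : nat) (G : Type)
  (mulG : G -> G -> G) (oneG : G) (invG : G -> G)
  (act : G -> 'rV[R]_m -> 'rV[R]_m)
  (gamma : 'rV[R]_n -> 'rV[R]_m) (A : Type) (Lam : A -> 'rV[R]_m -> 'rV[R]_n)
  (phi : 'rV[R]_m -> \bar R) (X : 'rV[R]_n) :
  spectral_decomposition_system mulG oneG invG act gamma Lam ->
  proper_fun phi -> S_invariant act phi ->
  [/\ (forall Y : 'rV[R]_n,
         subdiff (phi \o gamma) X Y <->
         (subdiff phi (gamma X) (gamma Y) /\
          exists a, X = Lam a (gamma X) /\ Y = Lam a (gamma Y))),
      subdiff (phi \o gamma) X =
        [set Z | exists a y, [/\ A_of gamma Lam X a, subdiff phi (gamma X) y & Z = Lam a y]]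
    & ((exists Y, subdiff (phi \o gamma) X = [set Y]) <->
       (exists y, subdiff phi (gamma X) = [set y]))].
Proof.
move=> sds phi_proper phi_inv; split.
- exact (subdiff_comp_gammaP sds phi_proper phi_inv X).
- exact (subdiff_comp_gammaE sds phi_proper phi_inv X).
- exact (subdiff_comp_gamma_set1 sds phi_proper phi_inv X).
Qed.
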